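(* Let $\{K_1,\ldots,K_n\}$ be a strictly totally positive structure on $\mathbb{R}^n$. Then for every $j=2,\ldots,n$ the intersection $\operatorname{int}(K_j)\cap\barwedge^j\mathbb{R}^n$ contains a nonzero element.
   Context: A proper cone is a closed convex cone that is pointed and solid. $\wedge^j\mathbb{R}^n$ is the $j$th exterior power of $\mathbb{R}^n$; $\barwedge^j\mathbb{R}^n$ (the Grassmann cone) is the set of simple $j$-vectors, i.e. elements of the form $x_1\wedge\cdots\wedge x_j$ with $x_1,\ldots,x_j\in\mathbb{R}^n$. $\wedge^jA$ is the operator with $(\wedge^jA)(x_1\wedge\cdots\wedge x_j)=Ax_1\wedge\cdots\wedge Ax_j$. A totally positive structure is a family $\{K_1,\ldots,K_n\}$ with $K_j\subset\wedge^j\mathbb{R}^n$ a proper cone; a linear operator $A$ on $\mathbb{R}^n$ is GSTP with respect to it if $\wedge^jA(K_j\setminus\{0\})\subseteq\operatorname{int}(K_j)$ for all $j=1,\ldots,n$. The structure is strictly totally positive if there exists at least one operator that is GSTP with respect to it. *)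

(* The j-th exterior power of R^n is modelled concretely by
   its Plucker coordinates: functions on the j-element subsets of 'I_n
   (standard basis e_{i_1} /\ ... /\ e_{i_j}, i_1 < ... < i_j). *)
From HB Require Import structures.
From mathcomp Require Import all_boot all_order all_algebra.
From mathcomp Require Import reals.
Set Implicit Arguments. Unset Strict Implicit. Unset Printing Implicit Defensive.
Import Order.TTheory GRing.Theory Num.Theory.
Local Open Scope ring_scope.

Definition jsub (n j : nat) := {S : {set 'I_n} | #|S| == j}.

(* the j x j submatrix of A with rows in S and columns in T, both taken in
   increasing order (entries padded by 0 outside the range, never used when
   #|S| = #|T| = j) *)
Definition subm (R : ringType) (m p : nat) (A : 'M[R]_(m, p))
  (S : {set 'I_m}) (T : {set 'I_p}) (j : nat) : 'M[R]_j :=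
  \matrix_(a < j, b < j)
    nth 0 [seq nth 0 [seq A r c | c <- enum T] b | r <- enum S] a.

Definition wvec (R : ringType) (n j : nat) := jsub n j -> R.

(* x_1 /\ ... /\ x_j, where x_k is the k-th column of M *)
Definition wedge_cols (R : comRingType) (n j : nat) (M : 'M[R]_(n, j)) :
  wvec R n j := fun S => \det (subm M (val S) [set: 'I_j] j).

Definition simple_vec (R : comRingType) (n j : nat) (v : wvec R n j) : Prop :=
  exists M : 'M[R]_(n, j), v = wedge_cols M.

(* /\^j A : the j-th compound matrix acting on Plucker coordinates *)
Definition wedge_op (R : comRingType) (n j : nat) (A : 'M[R]_n)
  (v : wvec R n j) : wvec R n j :=
  fun S => \sum_(T : jsub n j) \det (subm A (val S) (val T) j) * v T.

(* Euclidean topology on /\^j R^n (via the sup norm of coordinates) *)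
Definition winterior (R : realType) (n j : nat) (K : wvec R n j -> Prop)
  (v : wvec R n j) : Prop :=
  exists2 e : R, 0 < e & forall w : wvec R n j,
    (forall S, `|w S - v S| < e) -> K w.

Definition wclosed (R : realType) (n j : nat) (K : wvec R n j -> Prop) : Prop :=
  forall v : wvec R n j,
    (forall e : R, 0 < e -> exists w, K w /\ forall S, `|w S - v S| < e) -> K v.

Definition convex_cone (R : realType) (n j : nat) (K : wvec R n j -> Prop) : Prop :=
  [/\ K (fun _ => 0),
      forall v w, K v -> K w -> K (fun S => v S + w S) &
      forall (a : R) v, 0 <= a -> K v -> K (fun S => a * v S)].

Definition pointed (R : realType) (n j : nat) (K : wvec R n j -> Prop) : Prop :=
  forall v, K v -> K (fun S => - v S) -> forall S, v S = 0.

Definition solid (R : realType) (n j : nat) (K : wvec R n j -> Prop) : Prop :=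
  exists v, winterior K v.

Definition proper_cone (R : realType) (n j : nat) (K : wvec R n j -> Prop) : Prop :=
  [/\ wclosed K, convex_cone K, pointed K & solid K].

Definition TP_structure (R : realType) (n : nat)
  (K : forall j : nat, wvec R n j -> Prop) : Prop :=
  forall j, (1 <= j <= n)%N -> proper_cone (K j).

Definition GSTP (R : realType) (n : nat)
  (K : forall j : nat, wvec R n j -> Prop) (A : 'M[R]_n) : Prop :=
  forall j, (1 <= j <= n)%N -> forall v : wvec R n j,
    K j v -> ~ (forall S, v S = 0) -> winterior (K j) (wedge_op A v).

Definition STP_structure (R : realType) (n : nat)
  (K : forall j : nat, wvec R n j -> Prop) : Prop :=
  TP_structure K /\ exists A : 'M[R]_n, GSTP K A.

(* The compound [B = /\^j A] of a GSTP operator maps [K_j \ 0] into the interior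
   of [K_j]; by compactness of the unit sphere of [K_j] this is uniform, and [B]
   becomes a strict contraction of Hilbert's projective metric: if [a q <= y <= b q]
   in the order of [K_j], then [B y] lies between multiples of [B q] whose gap is
   smaller by a fixed factor [1 - eta].  Split an interior point [p] into its
   Plucker components [x_S = p_S e_S], which are simple.  After [k] steps each
   [B^k x_S] lies between [a_S B^k p] and [b_S B^k p] with [sum_S (b_S - a_S) < 1];
   as the [B^k x_S] add up to [B^k p], some [a_S] is positive, and then [B^k x_S]
   is an interior point.  It is simple since compounds map [x_1 /\ ... /\ x_j] to
   [A x_1 /\ ... /\ A x_j] (Cauchy-Binet). *)

From mathcomp Require Import all_boot all_order all_algebra all_fingroup.
From mathcomp Require Import all_classical all_reals topology normedtype sequences.
From mathcomp Require Import matrix_topology matrix_normedtype.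
From mathcomp Require Import ring lra.
Set Implicit Arguments. Unset Strict Implicit. Unset Printing Implicit Defensive.
Import Order.TTheory GRing.Theory Num.Theory numFieldNormedType.Exports.
Local Open Scope ring_scope.

Section SupNorm.
Variables (R : realFieldType) (I : finType).
Implicit Types (u v : I -> R).

Definition supn v : R := \big[Num.max/0]_i `|v i|.

Lemma supn_ge0 v : 0 <= supn v.
Proof. exact: bigmax_ge_id. Qed.

Lemma ler_supn v i : `|v i| <= supn v.
Proof. exact: le_bigmax. Qed.

Lemma supn_le v m : 0 <= m -> (forall i, `|v i| <= m) -> supn v <= m.
Proof. by move=> m0 vm; apply: bigmax_le. Qed.

Lemma supn_lt v m : 0 < m -> (forall i, `|v i| < m) -> supn v < m.
Proof. by move=> m0 vm; apply: bigmax_lt. Qed.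

Lemma supn_eq0 v : supn v = 0 -> forall i, v i = 0.
Proof.
by move=> v0 i; apply/eqP; rewrite -normr_eq0 eq_le normr_ge0 -v0 ler_supn.
Qed.

Lemma supnD u v : supn (fun i => u i + v i) <= supn u + supn v.
Proof.
apply: supn_le => [|i]; first by rewrite addr_ge0 ?supn_ge0.
by rewrite (le_trans (ler_normD _ _)) // lerD ?ler_supn.
Qed.

Lemma supn_subl u v : supn u <= supn v + supn (fun i => u i - v i).
Proof.
have {1}-> : u = (fun i => v i + (u i - v i)) by apply: funext => i; rewrite addrC subrK.
exact: supnD.
Qed.

Lemma supnZ (c : R) v : supn (fun i => c * v i) = `|c| * supn v.
Proof.
apply/eqP; rewrite eq_le; apply/andP; split.
  apply: supn_le => [|i]; first by rewrite mulr_ge0 ?supn_ge0.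
  by rewrite normrM ler_wpM2l ?ler_supn.
have [->|c0] := eqVneq c 0; first by rewrite normr0 mul0r supn_ge0.
rewrite -ler_pdivlMl ?normr_gt0 //; apply: supn_le => [|i].
  by rewrite mulr_ge0 ?invr_ge0 ?supn_ge0.
by rewrite ler_pdivlMl ?normr_gt0 // -normrM (ler_supn (fun i => c * v i)).
Qed.

End SupNorm.

Lemma exists_expr_lt1 (R : realType) (x C : R) : 0 <= x < 1 ->
  exists k : nat, x ^+ k * C < 1.
Proof.
case/andP=> x0 x1; have C1 : 0 < `|C| + 1 by rewrite ltr_wpDl.
have /cvgr0_norm_lt xto0 : ((x ^+ k) @[k --> \oo] --> 0)%classic.
  by apply: cvg_expr; rewrite ger0_norm.
have /filter_ex [k xk] : (\forall k \near \oo, `|x ^+ k| < (`|C| + 1)^-1)%classic.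
  by apply: xto0; rewrite invr_gt0.
exists k; rewrite ger0_norm ?exprn_ge0 // -(ltr_pM2r C1) mulVf ?gt_eqF // in xk.
apply: (le_lt_trans (ler_norm _)); apply: le_lt_trans xk.
by rewrite normrM ger0_norm ?exprn_ge0 // ler_wpM2l ?exprn_ge0 ?lerDl.
Qed.

Section UniformMargin.
Local Open Scope classical_set_scope.
Variables (R : realType) (I : finType) (K : (I -> R) -> Prop).
Variables (B : (I -> R) -> I -> R) (L : R) (p : I -> R).
Hypotheses (L_gt0 : 0 < L)
  (K_closed : forall v,
     (forall e, 0 < e -> exists w, K w /\ forall i, `|w i - v i| < e) -> K v)
  (B_lipschitz : forall u v i, `|B u i - B v i| <= L * supn (fun k => u k - v k)).

(* Compactness is proved in ['rV_#|I|], identified with [I -> R] through [enum_rank]. *)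
Local Notation coord x := (fun i : I => x ord0 (enum_rank i)).

Lemma compact_cone_sphere :
  compact [set x : 'rV[R]_#|I| | K (coord x) /\ supn (coord x) = 1].
Proof.
set C := [set x | _]; apply: (@subclosed_compact _ C
    [set v : 'rV[R]_#|I| | forall k, `[(-1 : R), 1]%classic (v ord0 k)]).
- move=> x clx.
  have near_x e : 0 < e -> exists y, C y /\ forall i, `|coord y i - coord x i| < e.
    move=> e0; have [y [Cy [_ xy]]] := clx _ (nbhsx_ballx x e e0).
    by exists y; split => // i; rewrite distrC; apply: xy.
  split.
    by apply: K_closed => e /near_x [y [[Ky _] yx]]; exists (coord y).
  apply/eqP; rewrite eq_le; apply/andP; split; apply/ler_addgt0Pr => e e0;
      have [y [[_ <-] yx]] := near_x e e0.
    apply: le_trans (supn_subl _ (coord y)) _; rewrite lerD //.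
    by apply: supn_le => [|i]; [exact: ltW | rewrite distrC; exact: ltW].
  apply: le_trans (supn_subl _ (coord x)) _; rewrite lerD //.
  by apply: supn_le => [|i]; [exact: ltW | exact: ltW].
- by apply: (@rV_compact _ _ (fun=> `[(-1 : R), 1]%classic)) => k; apply: segment_compact.
- move=> x [_ x1] k; have := ler_supn (coord x) (enum_val k).
  by rewrite x1 enum_valK /= in_itv /= -ler_norml.
Qed.

Lemma margin_near (z : I -> R) (e : R) : 0 < e ->
  (forall w, (forall i, `|w i - B z i| < e) -> K w) ->
  let d := Num.min (e / (2 * L)) (e / (2 * (supn p + 1))) in
  forall z' a, supn (fun i => z' i - z i) < d -> 0 < a < d ->
  K (fun i => B z' i - a * p i).
Proof.
move=> e0 Kball d z' a zz' /andP [a0 ad]; apply: Kball => i.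
have p1 : 0 < supn p + 1 by rewrite ltr_wpDl ?supn_ge0.
rewrite addrAC (splitr e); apply: le_lt_trans (ler_normD _ _) _; apply: ltr_leD.
  apply: le_lt_trans (B_lipschitz _ _ i) _; rewrite mulrC -ltr_pdivlMr //.
  by rewrite -mulrA -invfM; apply: lt_le_trans zz' _; rewrite ge_min lexx.
rewrite normrN normrM gtr0_norm //; apply: le_trans (_ : a * (supn p + 1) <= _).
  by apply: ler_wpM2l; [exact: ltW | apply: le_trans (ler_supn p i) _; rewrite lerDl].
rewrite -ler_pdivlMr // -mulrA -invfM.
by apply: le_trans (ltW ad) _; rewrite ge_min lexx orbT.
Qed.

Lemma uniform_margin :
  (forall z, K z -> supn z = 1 ->
     exists2 e, 0 < e & forall w, (forall i, `|w i - B z i| < e) -> K w) ->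
  exists2 a, 0 < a & forall z, K z -> supn z = 1 -> K (fun i => B z i - a * p i).
Proof.
move=> Bint; have FF : Filter ((0 : R)^'+) by apply: at_right_proper_filter.
have [|d d0 Hd] := (compact_near_coveringP _).1 compact_cone_sphere R ((0 : R)^'+)
    (fun a x => K (fun i => B (coord x) i - a * p i)) FF.
  move=> x [Kx x1]; have [e e0 Kball] := Bint _ Kx x1.
  have := margin_near e0 Kball; set d := Num.min _ _ => Hd.
  have d0 : 0 < d by rewrite lt_min !divr_gt0 ?mulr_gt0 ?ltr_wpDl ?supn_ge0.
  exists (ball x d, [set a | 0 < a < d]) => /=.
    split; first exact: nbhsx_ballx.
    near=> a; apply/andP; split.
      by near: a; apply: nbhs_right_gt.
    by near: a; apply: nbhs_right_lt.
  move=> [x' a] [/= [_ xx'] ad]; apply: Hd ad.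
  by apply: supn_lt => // i; rewrite distrC; apply: xx'.
exists (d / 2) => [|z Kz z1]; first by rewrite divr_gt0.
pose x : 'rV[R]_#|I| := \row_k z (enum_val k).
have zx : z = coord x by apply: funext => i; rewrite mxE enum_rankK.
rewrite zx in Kz z1 *; apply: (Hd (d / 2) _ _ x) => //; last by rewrite divr_gt0.
rewrite /ball_ /= sub0r normrN gtr0_norm ?divr_gt0 //.
by rewrite ltr_pdivrMr // ltr_pMr // ltr1n.
Unshelve. all: by end_near.
Qed.

End UniformMargin.

Section CauchyBinet.
Variables (R : comNzRingType) (n j : nat).

Definition jnth (S : jsub n j) : 'I_j -> 'I_n :=
  fun a => enum_val (cast_ord (esym (eqP (valP S))) a).

Lemma jnth_inj S : injective (jnth S).
Proof. by move=> a b /enum_val_inj /cast_ord_inj. Qed.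

Lemma mem_jnth S a : jnth S a \in val S.
Proof. exact: enum_valP. Qed.

Lemma jnthP (S : jsub n j) x : x \in val S -> exists a, x = jnth S a.
Proof.
move=> Sx; exists (cast_ord (eqP (valP S)) (enum_rank_in Sx x)).
by rewrite /jnth cast_ordK enum_rankK_in.
Qed.

Lemma nth_enum_jsub (S : jsub n j) (a : 'I_j) x0 :
  nth x0 (enum (val S)) a = jnth S a.
Proof.
rewrite /jnth /enum_val; apply: set_nth_default.
by rewrite -cardE (eqP (valP S)).
Qed.

Lemma subm_jnth (A : 'M[R]_n) (S T : jsub n j) :
  subm A (val S) (val T) j = \matrix_(a, b) A (jnth S a) (jnth T b).
Proof.
apply/matrixP=> a b; rewrite !mxE.
have x0 : 'I_n := jnth S a.
rewrite (nth_map x0) ?size_map -?cardE ?(eqP (valP S)) //.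
rewrite (nth_map x0) ?size_map -?cardE ?(eqP (valP T)) //.
by rewrite !nth_enum_jsub.
Qed.

Lemma subm_setT (M : 'M[R]_(n, j)) (S : jsub n j) :
  subm M (val S) [set: 'I_j] j = \matrix_(a, b) M (jnth S a) b.
Proof.
apply/matrixP=> a b; rewrite !mxE.
have x0 : 'I_n := jnth S a.
rewrite (nth_map x0) ?size_map -?cardE ?(eqP (valP S)) //.
rewrite (nth_map b) ?size_map -?cardE ?cardsT ?card_ord //.
rewrite nth_enum_jsub; congr (M _ _).
have -> : enum [set: 'I_j] = enum 'I_j by apply: eq_enum => x; rewrite inE.
exact: nth_ord_enum.
Qed.

Definition jnth_perm (Tt : jsub n j * 'S_j) : {ffun 'I_j -> 'I_n} :=
  [ffun i => jnth Tt.1 (Tt.2 i)].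

Lemma jnth_perm_inj : injective jnth_perm.
Proof.
move=> [T t] [T' t'] /ffunP E.
have ET : T = T'.
  apply: val_inj; apply/setP => x; apply/idP/idP => /jnthP [a ->].
  - have := E (t^-1 a)%g; rewrite !ffunE /= permKV => ->; exact: mem_jnth.
  - have := E (t'^-1 a)%g; rewrite !ffunE /= permKV => <-; exact: mem_jnth.
subst T'; congr (_, _); apply/permP => i.
by have := E i; rewrite !ffunE /= => /jnth_inj.
Qed.

Lemma injectiveb_jnth_perm (f : {ffun 'I_j -> 'I_n}) :
  injectiveb f = (f \in jnth_perm @: [set: jsub n j * 'S_j]).
Proof.
apply/idP/idP; last first.
  case/imsetP => -[T t] _ ->; apply/injectiveP => a b.
  by rewrite !ffunE /= => /jnth_inj /perm_inj.
move/injectiveP => finj.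
have cT : #|[set f i | i : 'I_j]| == j by rewrite card_imset // card_ord.
pose T : jsub n j := exist (fun S : {set 'I_n} => #|S| == j) _ cT.
have Ti i : f i \in val T by rewrite /= imset_f.
pose t0 i := cast_ord (eqP (valP T)) (enum_rank_in (Ti i) (f i)).
have et0 i : jnth T (t0 i) = f i by rewrite /jnth /t0 cast_ordK enum_rankK_in.
have t0inj : injective t0.
  by move=> a b Eab; apply: finj; rewrite -!et0 Eab.
apply/imsetP; exists (T, perm t0inj) => //.
by apply/ffunP => i; rewrite ffunE /= permE et0.
Qed.

Lemma det_mulmx_ffun (P : 'M[R]_(j, n)) (Q : 'M[R]_(n, j)) :
  \det (P *m Q) =
    \sum_(f : {ffun 'I_j -> 'I_n}) \det (\matrix_(i, k) Q (f i) k) * \prod_i P i (f i).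
Proof.
transitivity (\sum_(f : {ffun 'I_j -> 'I_n}) \sum_(s : 'S_j) (-1) ^+ s *
    \prod_i (P i (f i) * Q (f i) (s i))).
  rewrite exchange_big; apply: eq_bigr => s _ /=; rewrite -big_distrr /=.
  congr (_ * _); rewrite -(bigA_distr_bigA (fun i k => P i k * Q k (s i))) /=.
  by apply: eq_bigr => i _; rewrite mxE.
apply: eq_bigr => f _; rewrite big_distrl /=; apply: eq_bigr => s _.
rewrite big_split /= (mulrC (\prod_i P _ _)) mulrA; congr (_ * _ * _).
by apply: eq_bigr => i _; rewrite mxE.
Qed.

(* Only injective [f] contribute, and they are the [jnth T \o t] for [t : 'S_j]. *)
Lemma cauchy_binet (P : 'M[R]_(j, n)) (Q : 'M[R]_(n, j)) :
  \det (P *m Q) = \sum_(T : jsub n j)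
    \det (\matrix_(a, b) P a (jnth T b)) * \det (\matrix_(a, b) Q (jnth T a) b).
Proof.
rewrite det_mulmx_ffun (bigID (fun f : {ffun 'I_j -> 'I_n} => injectiveb f)) /=.
rewrite [X in _ + X]big1 ?addr0 => [|f /injectivePn [i1 [i2 Di12 Ef]]]; last first.
  by rewrite (determinant_alternate Di12) ?mul0r // => k; rewrite !mxE Ef.
rewrite (eq_bigl (mem (jnth_perm @: [set: jsub n j * 'S_j]))) => [|f];
  last by rewrite injectiveb_jnth_perm.
rewrite big_imset /= => [|Tt Tt' _ _]; last exact: jnth_perm_inj.
rewrite (eq_bigl (fun Tt => predT Tt.1 && predT Tt.2)) => [|Tt]; last by rewrite inE.
rewrite -(pair_big predT predT (fun T t =>
  \det (\matrix_(i, k) Q (jnth_perm (T, t) i) k) * \prod_i P i (jnth_perm (T, t) i))) /=.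
apply: eq_bigr => T _; rewrite [X in _ = X * _]/(\det _) big_distrl /=.
apply: eq_bigr => t _.
have -> : \matrix_(i, k) Q (jnth_perm (T, t) i) k =
    perm_mx t *m \matrix_(a, b) Q (jnth T a) b.
  by rewrite -row_permE; apply/matrixP => i k; rewrite !mxE ffunE.
rewrite det_mulmx det_perm -!mulrA; congr (_ * _); rewrite mulrC.
by congr (_ * _); apply: eq_bigr => i _; rewrite !mxE ffunE.
Qed.

End CauchyBinet.

Section CompoundAction.
Variables (R : comNzRingType) (n j : nat) (A : 'M[R]_n).
Implicit Types (u v : wvec R n j).
Local Notation B := (wedge_op A).

Lemma wedge_opZ (c : R) u : B (fun S => c * u S) = (fun S => c * B u S).
Proof.
apply: funext => S; rewrite /wedge_op big_distrr /=.
by apply: eq_bigr => T _; rewrite mulrCA.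
Qed.

Lemma wedge_opB (a b : R) u v S :
  B (fun T => a * u T - b * v T) S = a * B u S - b * B v S.
Proof.
rewrite /wedge_op !big_distrr -sumrB /=.
by apply: eq_bigr => T _; ring.
Qed.

Lemma wedge_op_sum (I : finType) (f : I -> wvec R n j) :
  B (fun S => \sum_i f i S) = (fun S => \sum_i B (f i) S).
Proof.
apply: funext => S; rewrite /wedge_op exchange_big /=.
by apply: eq_bigr => T _; rewrite big_distrr.
Qed.

Lemma wedge_op0 u : (forall S, u S = 0) -> forall S, B u S = 0.
Proof. by move=> u0 S; rewrite /wedge_op big1 // => T _; rewrite u0 mulr0. Qed.

Lemma wedge_op_cols (M : 'M[R]_(n, j)) : B (wedge_cols M) = wedge_cols (A *m M).
Proof.
apply: funext => S; rewrite /wedge_op /wedge_cols subm_setT.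
have -> : \matrix_(a, b) (A *m M) (jnth S a) b = (\matrix_(a, i) A (jnth S a) i) *m M.
  by apply/matrixP => a b; rewrite !mxE; apply: eq_bigr => i _; rewrite mxE.
rewrite cauchy_binet; apply: eq_bigr => T _; rewrite subm_jnth subm_setT.
by congr (\det _ * _); apply/matrixP => a b; rewrite !mxE.
Qed.

Lemma simple_wedge_op v : simple_vec v -> simple_vec (B v).
Proof. by move=> [M ->]; exists (A *m M); rewrite wedge_op_cols. Qed.

End CompoundAction.

Lemma simple_basis (R : comNzRingType) (n j : nat) (S : jsub n j) (c : R) (k : 'I_j) :
  simple_vec (fun T => if T == S then c else 0).
Proof.
pose E : 'M[R]_(n, j) :=
  \matrix_(i, b) (if i == jnth S b then (if b == k then c else 1) else 0).
exists E; apply: funext => T; rewrite /wedge_cols subm_setT.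
have [->|TS] := eqVneq T S.
  rewrite det_trig; last first.
    apply/forallP => a; apply/forallP => b; apply/implyP => ab.
    by rewrite !mxE (inj_eq (@jnth_inj _ _ S)) -val_eqE ltn_eqF.
  rewrite (bigD1 k) //= !mxE !eqxx big1 ?mulr1 // => a /negbTE ab.
  by rewrite !mxE eqxx ab.
have [a Ha] : exists a, jnth T a \notin val S.
  apply/existsP; apply: contraNT TS; rewrite negb_exists => /forallP H.
  apply/eqP/val_inj/eqP; rewrite eqEcard (eqP (valP T)) (eqP (valP S)) leqnn andbT.
  by apply/fintype.subsetP => x /jnthP [b ->]; have := H b; rewrite negbK.
rewrite (expand_det_row _ a) big1 // => b _; rewrite !mxE.
have -> : (jnth T a == jnth S b) = false.
  by apply: contraNF Ha => /eqP ->; exact: mem_jnth.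
by rewrite mul0r.
Qed.

Section Cone.
Variables (R : realType) (n j : nat) (K : wvec R n j -> Prop).
Hypotheses (K_cone : convex_cone K) (K_pointed : pointed K) (S0 : jsub n j).
Implicit Types (u v w : wvec R n j).

Lemma cone_eq u v : K u -> (forall S, u S = v S) -> K v.
Proof. by move=> Ku E; have -> : v = u by apply: funext => S; rewrite E. Qed.

Lemma cone0 : K (fun _ => 0).
Proof. by case: K_cone. Qed.

Lemma cone_comb u v w (a b : R) : K u -> K v -> 0 <= a -> 0 <= b ->
  (forall S, w S = a * u S + b * v S) -> K w.
Proof.
case: K_cone => _ KD KZ Ku Kv a0 b0 E.
by apply: (cone_eq (KD _ _ (KZ a u a0 Ku) (KZ b v b0 Kv))) => S; rewrite E.
Qed.

Lemma cone_scale u w (a : R) : K u -> 0 <= a -> (forall S, w S = a * u S) -> K w.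
Proof.
move=> Ku a0 E; apply: (cone_comb Ku Ku a0 (lexx 0)) => S; by rewrite E mul0r addr0.
Qed.

Lemma winterior_mem v : winterior K v -> K v.
Proof. by case=> e e0 H; apply: H => S; rewrite subrr normr0. Qed.

Lemma winteriorDl u v : K u -> winterior K v -> winterior K (fun S => u S + v S).
Proof.
move=> Ku [e e0 H]; exists e => // w Hw.
have Kwu : K (fun S => w S - u S).
  by apply: H => S; rewrite -addrA -opprD; exact: Hw.
by apply: (cone_comb Ku Kwu ler01 ler01) => S; rewrite !mul1r addrC subrK.
Qed.

Lemma winteriorZ (c : R) v : 0 < c -> winterior K v -> winterior K (fun S => c * v S).
Proof.
move=> c0 [e e0 H]; exists (c * e); first by rewrite mulr_gt0.
move=> w Hw.
have Kw : K (fun S => c^-1 * w S).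
  apply: H => S; rewrite -(ltr_pM2l c0) -[X in X * `|_|](gtr0_norm c0) -normrM mulrBr.
  by rewrite mulrA mulfV ?gt_eqF // mul1r.
by apply: (cone_scale Kw (ltW c0)) => S; rewrite mulrA mulfV ?gt_eqF // mul1r.
Qed.

Lemma winterior_above q y (a : R) : 0 < a -> winterior K q ->
  K (fun S => y S - a * q S) -> winterior K y.
Proof.
move=> a0 q_int Kya.
have -> : y = fun S => (y S - a * q S) + a * q S by apply: funext => S; rewrite subrK.
exact: winteriorDl Kya (winteriorZ a0 q_int).
Qed.

Lemma winterior_neq0 v : winterior K v -> ~ (forall S, v S = 0).
Proof.
move=> [e e0 H] v0.
have e2 : 0 < e / 2 by rewrite divr_gt0.
have h2 : e / 2 < e by rewrite ltr_pdivrMr // ltr_pMr // ltr1n.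
have K1 : K (fun _ => e / 2).
  by apply: H => S; rewrite v0 subr0 gtr0_norm.
have K2 : K (fun _ => - (e / 2)).
  by apply: H => S; rewrite v0 subr0 normrN gtr0_norm.
by have := K_pointed K1 K2 S0; move/eqP; rewrite gt_eqF.
Qed.

Lemma cone_sum (I : finType) (f : I -> wvec R n j) :
  (forall i, K (f i)) -> K (fun S => \sum_(i : I) f i S).
Proof.
move=> Kf; suff H : forall s : seq I, K (fun S => \sum_(i <- s) f i S) by apply: H.
elim => [|i s IH]; first by apply: (cone_eq cone0) => S; rewrite big_nil.
by apply: (cone_comb (Kf i) IH ler01 ler01) => S; rewrite big_cons !mul1r.
Qed.

Lemma winterior_dominates p : winterior K p ->
  exists2 c : R, 0 < c & forall y, K (fun S => supn y * p S - c * y S).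
Proof.
move=> [e e0 Kball]; exists (e / 2) => [|y]; first by rewrite divr_gt0.
have [y0|y0] := eqVneq (supn y) 0.
  by apply: (cone_eq cone0) => S; rewrite y0 (supn_eq0 y0) mul0r mulr0 subrr.
have y_gt0 : 0 < supn y by rewrite lt_def y0 supn_ge0.
have Kw : K (fun S => p S - e / 2 / supn y * y S).
  apply: Kball => S; rewrite addrAC subrr add0r normrN normrM gtr0_norm ?divr_gt0 //.
  apply: le_lt_trans (ler_wpM2l _ (ler_supn y S)) _; first by rewrite ltW ?divr_gt0.
  by rewrite divfK // ltr_pdivrMr // ltr_pMr // ltr1n.
apply: (cone_scale Kw (ltW y_gt0)) => S; rewrite mulrBr; congr (_ - _).
by rewrite mulrA mulrCA divff // mulr1.
Qed.

Lemma winterior_squeeze p y : winterior K p ->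
  exists a b : R, K (fun S => y S - a * p S) /\ K (fun S => b * p S - y S).
Proof.
move=> /winterior_dominates [c c0 Kdom].
exists (- (supn (fun S => - y S) / c)), (supn y / c).
split.
  apply: (cone_scale (Kdom (fun S => - y S)) (_ : 0 <= c^-1)) => [|S].
    by rewrite invr_ge0 ltW.
  by field; rewrite gt_eqF.
apply: (cone_scale (Kdom y) (_ : 0 <= c^-1)) => [|S]; first by rewrite invr_ge0 ltW.
by field; rewrite gt_eqF.
Qed.

(* Otherwise [q <= (sum_i b i) q] with [sum_i b i < 1], so that [- q] lies in [K]. *)
Lemma exists_squeeze_lower_gt0 (I : finType) q (y : I -> wvec R n j) (a b : I -> R) :
  winterior K q -> (forall S, q S = \sum_i y i S) ->
  (forall i, K (fun S => y i S - a i * q S)) ->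
  (forall i, K (fun S => b i * q S - y i S)) ->
  \sum_i (b i - a i) < 1 -> exists i, 0 < a i.
Proof.
move=> q_int qy Ka Kb gap; apply: contrapT => a_le0.
have {}a_le0 i : a i <= 0 by rewrite leNgt; apply/negP => ai; apply: a_le0; exists i.
have b_lt1 : \sum_i b i < 1.
  by apply: le_lt_trans gap; apply: ler_sum => i _; rewrite lerDl oppr_ge0.
have Kneg : K (fun S => (\sum_i b i - 1) * q S).
  apply: (cone_eq (cone_sum Kb)) => S.
  by rewrite sumrB -mulr_suml -qy mulrBl mul1r.
have Kmq : K (fun S => - q S).
  apply: (cone_scale Kneg (_ : 0 <= (1 - \sum_i b i)^-1)) => [|S].
    by rewrite invr_ge0 subr_ge0 ltW.
  by field; rewrite subr_eq0 eq_sym lt_eqF.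
exact: winterior_neq0 q_int (K_pointed (winterior_mem q_int) Kmq).
Qed.

End Cone.

Section CompoundLipschitz.
Variables (R : realType) (n j : nat) (A : 'M[R]_n).
Implicit Types (u v w : wvec R n j).
Local Notation B := (wedge_op A).

Definition wedge_lip : R :=
  \big[Num.max/0]_(S : jsub n j) \sum_(T : jsub n j)
     `|\det (subm A (val S) (val T) j)| + 1.

Lemma wedge_lip_gt0 : 0 < wedge_lip.
Proof. by rewrite ltr_wpDl ?supn_ge0 //; apply: bigmax_ge_id. Qed.

Lemma wedge_op_lipschitz u v S :
  `|B u S - B v S| <= wedge_lip * supn (fun k => u k - v k).
Proof.
rewrite /wedge_op -sumrB.
apply: (le_trans (ler_norm_sum _ _ _)).
apply: (@le_trans _ _ (\sum_T `|\det (subm A (val S) (val T) j)| *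
   supn (fun k => u k - v k))).
  apply: ler_sum => T _; rewrite -mulrBr normrM ler_wpM2l //.
  exact: (ler_supn (fun k => u k - v k)).
rewrite -big_distrl /= ler_wpM2r ?supn_ge0 //.
apply: (@le_trans _ _ (wedge_lip - 1)); last by rewrite lerBlDr lerDl.
rewrite /wedge_lip addrK; exact: (le_bigmax _ _ S).
Qed.

End CompoundLipschitz.

Section Contraction.
Variables (R : realType) (n j : nat) (A : 'M[R]_n) (K : wvec R n j -> Prop).
Hypotheses (K_closed : wclosed K) (K_cone : convex_cone K) (K_pointed : pointed K).
Variable S0 : jsub n j.
Local Notation B := (wedge_op A).
Local Notation L := (@wedge_lip R n j A).
Hypothesis B_interior : forall v, K v -> ~ (forall S, v S = 0) -> winterior K (B v).
Variable p : wvec R n j.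
Hypothesis p_interior : winterior K p.
Implicit Types (u v w y z q : wvec R n j).

Lemma wedge_op_cone u : K u -> K (B u).
Proof.
move=> Ku; have [u0|u0] := pselect (forall S, u S = 0).
  by apply: (cone_eq (cone0 K_cone)) => S; rewrite wedge_op0.
exact: winterior_mem (B_interior Ku u0).
Qed.

Lemma supn_wedge_op u : supn (B u) <= L * supn u.
Proof.
apply: supn_le => [|S]; first by rewrite mulr_ge0 ?supn_ge0 ?ltW ?wedge_lip_gt0.
have := wedge_op_lipschitz A u (fun _ => 0) S.
rewrite (@wedge_op0 _ _ _ A (fun _ => 0)) // subr0.
by have -> : (fun k => u k - 0) = u by apply: funext => k; rewrite subr0.
Qed.

Lemma wedge_op_lower_bound : exists2 al : R, 0 < al &
  forall z, K z -> K (fun S => B z S - al * supn z * p S).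
Proof.
have [|al al0 Bz_al] :=
  uniform_margin p (@wedge_lip_gt0 R n j A) K_closed (wedge_op_lipschitz A).
  move=> z Kz z1; apply: B_interior Kz _ => z0.
  have : supn z <= 0 by apply: supn_le => // S; rewrite z0 normr0.
  by rewrite z1 ler10.
exists al => // z Kz; have [z0|z0] := eqVneq (supn z) 0.
  apply: (cone_eq (cone0 K_cone)) => S; rewrite z0 mulr0 mul0r subr0 wedge_op0 //.
  exact: supn_eq0.
have z_gt0 : 0 < supn z by rewrite lt_def z0 supn_ge0.
have Kz1 : K (fun S => (supn z)^-1 * z S).
  by apply: (cone_scale K_cone Kz (_ : 0 <= (supn z)^-1)); rewrite // invr_ge0 ltW.
have := Bz_al _ Kz1; rewrite supnZ gtr0_norm ?invr_gt0 // mulVf // wedge_opZ => Kal.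
apply: (cone_scale K_cone (Kal erefl) (ltW z_gt0)) => S.
by rewrite mulrBr mulrA mulfV ?mul1r // mulrCA mulrA.
Qed.

(* [B z >= al |z| p] while [c B q <= |B q| p] and [|B q| <= L |q| <= 2 L |z|]. *)
Lemma wedge_op_dominates (al c eta : R) z q : 0 < al -> 0 < c ->
  (forall z, K z -> K (fun S => B z S - al * supn z * p S)) ->
  (forall y, K (fun S => supn y * p S - c * y S)) ->
  0 <= eta <= al * c / (2 * L) ->
  K z -> K q -> supn q <= 2 * supn z -> K (fun S => B z S - eta * B q S).
Proof.
move=> al0 c0 Bz_al dom /andP [eta0 eta_le] Kz Kq qz.
have L0 := @wedge_lip_gt0 R n j A.
have [z0|z0] := eqVneq (supn z) 0.
  have q0 : supn q = 0.
    by apply/eqP; rewrite eq_le supn_ge0 andbT; move: qz; rewrite z0 mulr0.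
  apply: (cone_eq (cone0 K_cone)) => S.
  by rewrite !(@wedge_op0 _ _ _ A) ?mulr0 ?subr0 //; apply: supn_eq0.
have z_gt0 : 0 < supn z by rewrite lt_def z0 supn_ge0.
set m := supn z in qz z_gt0 *; set Bq := supn (B q).
have Bq_le : Bq <= 2 * L * m.
  apply: le_trans (supn_wedge_op q) _.
  have -> : 2 * L * m = L * (2 * m) by ring.
  by rewrite ler_pM2l.
have K1 : K (fun S => Bq * B z S - al * m * c * B q S).
  apply: (cone_comb K_cone (Bz_al _ Kz) (dom (B q)) (supn_ge0 (B q)) (_ : 0 <= al * m)).
    by rewrite mulr_ge0 // ltW.
  by move=> S; rewrite /Bq /m; ring.
have K2 : K (fun S => 2 * L * m * B z S - al * m * c * B q S).
  apply: (cone_comb K_cone K1 (wedge_op_cone Kz) ler01 (_ : 0 <= 2 * L * m - Bq)).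
    by rewrite subr_ge0.
  by move=> S; ring.
have K3 : K (fun S => B z S - al * c / (2 * L) * B q S).
  apply: (cone_scale K_cone K2 (_ : 0 <= (2 * L * m)^-1)) => [|S].
    by rewrite invr_ge0 !mulr_ge0 // ltW.
  by field; rewrite ?gt_eqF //; lra.
apply: (cone_comb K_cone K3 (wedge_op_cone Kq) ler01 (_ : 0 <= al * c / (2 * L) - eta)).
  by rewrite subr_ge0.
by move=> S; ring.
Qed.

Definition wedge_op_contracts (eta : R) := forall z w, K z -> K w ->
  K (fun S => B z S - eta * B (fun T => z T + w T) S) \/
  K (fun S => B w S - eta * B (fun T => z T + w T) S).

Lemma exists_wedge_op_contracts : exists2 eta : R, 0 < eta <= 1 & wedge_op_contracts eta.
Proof.
have [al al0 Bz_al] := wedge_op_lower_bound.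
have [c c0 dom] := winterior_dominates K_cone p_interior.
have L0 := @wedge_lip_gt0 R n j A.
pose eta := Num.min (al * c / (2 * L)) 1.
have eta0 : 0 < eta by rewrite lt_min ltr01 !divr_gt0 ?mulr_gt0.
have eta_dom : 0 <= eta <= al * c / (2 * L) by rewrite ltW // ge_min lexx.
exists eta; first by rewrite eta0 ge_min lexx orbT.
move=> z w Kz Kw; have Kzw : K (fun T => z T + w T).
  by apply: (cone_comb K_cone Kz Kw ler01 ler01) => S; rewrite !mul1r.
have zw := supnD z w.
have [wz|zw'] := leP (supn w) (supn z).
  by left; apply: (wedge_op_dominates al0 c0 Bz_al dom eta_dom) => //; lra.
by right; apply: (wedge_op_dominates al0 c0 Bz_al dom eta_dom) => //; lra.
Qed.

Lemma wedge_op_squeeze (eta a b : R) y q : wedge_op_contracts eta ->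
  K (fun S => y S - a * q S) -> K (fun S => b * q S - y S) ->
  exists a' b' : R, [/\ b' - a' = (1 - eta) * (b - a),
    K (fun S => B y S - a' * B q S) & K (fun S => b' * B q S - B y S)].
Proof.
move=> contr Ky Kq.
have Bsum S : B (fun T => (b * q T - y T) + (y T - a * q T)) S = (b - a) * B q S.
  have -> : (fun T => (b * q T - y T) + (y T - a * q T)) =
      (fun T => (b - a) * q T - 0 * q T) by apply: funext => T; ring.
  by rewrite wedge_opB mul0r subr0.
have Bz S : B (fun T => b * q T - y T) S = b * B q S - B y S.
  have -> : (fun T => b * q T - y T) = (fun T => b * q T - 1 * y T).
    by apply: funext => T; rewrite mul1r.
  by rewrite wedge_opB mul1r.
have Bw S : B (fun T => y T - a * q T) S = B y S - a * B q S.
  have -> : (fun T => y T - a * q T) = (fun T => 1 * y T - a * q T).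
    by apply: funext => T; rewrite mul1r.
  by rewrite wedge_opB mul1r.
case: (contr _ _ Kq Ky) => [Kl|Kr].
  exists a, (b - eta * (b - a)); split; first by ring.
    by apply: (cone_eq (wedge_op_cone Ky)) => S; rewrite Bw.
  by apply: (cone_eq Kl) => S; rewrite Bz Bsum; ring.
exists (a + eta * (b - a)), b; split; first by ring.
  by apply: (cone_eq Kr) => S; rewrite Bw Bsum; ring.
by apply: (cone_eq (wedge_op_cone Kq)) => S; rewrite Bz.
Qed.

Lemma iter_wedge_op_squeeze (eta a b : R) x : wedge_op_contracts eta ->
  K (fun S => x S - a * p S) -> K (fun S => b * p S - x S) ->
  forall k, exists a' b' : R, [/\ b' - a' = (1 - eta) ^+ k * (b - a),
    K (fun S => iter k B x S - a' * iter k B p S) &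
    K (fun S => b' * iter k B p S - iter k B x S)].
Proof.
move=> contr Ka Kb; elim=> [|k [a' [b' [gap Ka' Kb']]]].
  by exists a, b; rewrite expr0 mul1r.
have [a'' [b'' [gap' Ka'' Kb'']]] := wedge_op_squeeze contr Ka' Kb'.
by exists a'', b''; rewrite exprS -mulrA -gap.
Qed.

Lemma iter_winterior k : winterior K (iter k B p).
Proof.
elim: k => //= k IH.
exact: B_interior (winterior_mem IH) (winterior_neq0 K_pointed S0 IH).
Qed.

Lemma iter_wedge_op_sum k (I : finType) (f : I -> wvec R n j) :
  iter k B (fun S => \sum_i f i S) = (fun S => \sum_i iter k B (f i) S).
Proof. by elim: k => //= k ->; rewrite wedge_op_sum. Qed.

Lemma simple_iter k v : simple_vec v -> simple_vec (iter k B v).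
Proof. by move=> sv; elim: k => //= k IH; apply: simple_wedge_op. Qed.

Lemma exists_simple_interior (k0 : 'I_j) :
  exists v, [/\ winterior K v, simple_vec v & ~ (forall S, v S = 0)].
Proof.
have [eta /andP [eta0 eta1] contr] := exists_wedge_op_contracts.
pose x S : wvec R n j := fun T => if T == S then p S else 0.
have px : p = fun T => \sum_S x S T.
  by apply: funext => T; rewrite -big_mkcond (big_pred1 T) // => S; rewrite eq_sym.
have [a0 [b0 x_squeezed]] : exists a0 b0 : jsub n j -> R, forall S,
    K (fun T => x S T - a0 S * p T) /\ K (fun T => b0 S * p T - x S T).
  have [ab xab] := choice (fun S => winterior_squeeze K_cone (x S) p_interior).
  have [ab' xab'] := choice xab.
  by exists ab, ab'.
have [k gap_lt1] : exists k, (1 - eta) ^+ k * \sum_S (b0 S - a0 S) < 1.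
  by apply: exists_expr_lt1; rewrite subr_ge0 eta1 ltrBlDr ltrDl.
have [ab Hab] := choice (fun S => iter_wedge_op_squeeze contr
  (x_squeezed S).1 (x_squeezed S).2 k).
have [ab' {}Hab] := choice Hab.
have [S aS_gt0] : exists S, 0 < ab S.
  apply: (exists_squeeze_lower_gt0 K_cone K_pointed S0 (iter_winterior k)
    (y := fun S => iter k B (x S)) (b := ab')).
  - by move=> T; rewrite {1}px iter_wedge_op_sum.
  - by move=> S; case: (Hab S).
  - by move=> S; case: (Hab S).
  - apply: le_lt_trans gap_lt1; rewrite mulr_sumr le_eqVlt; apply/orP; left.
    by apply/eqP/eq_bigr => S _; case: (Hab S).
have xS_interior : winterior K (iter k B (x S)).
  by apply: (winterior_above K_cone aS_gt0 (iter_winterior k)); case: (Hab S).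
exists (iter k B (x S)); split=> //; first exact: simple_iter (simple_basis _ _ k0).
exact: (winterior_neq0 K_pointed S0 xS_interior).
Qed.

End Contraction.

Theorem corollary23 (R : realType) (n : nat)
  (K : forall j : nat, wvec R n j -> Prop) :
  STP_structure K ->
  forall j : nat, (2 <= j <= n)%N ->
  exists v : wvec R n j,
    [/\ winterior (K j) v, simple_vec v & ~ (forall S, v S = 0)].
Proof.
move=> [K_proper [A A_gstp]] j /andP [j2 jn].
have j_gt0 : (0 < j)%N by apply: leq_trans j2.
have j_range : (1 <= j <= n)%N by rewrite j_gt0 jn.
have [K_closed K_cone K_pointed [p p_interior]] := K_proper j j_range.
have first_j : #|[set widen_ord jn a | a : 'I_j]| == j.
  by rewrite card_imset ?card_ord // => a b /(congr1 val) ab; apply: val_inj.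
pose S0 : jsub n j := exist (fun S : {set 'I_n} => #|S| == j) _ first_j.
exact: (exists_simple_interior K_closed K_cone K_pointed S0 (A_gstp j j_range)
  p_interior (Ordinal j_gt0)).
Qed.
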